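(* If $G$ is a connected graph with $n$ vertices and $k>0$ basis forced vertices, then $k\leq n-\dim(G)-1$. Moreover, $k\leq \frac{n-1}{2}$.
   Context: All graphs are finite and simple. For vertices $u,v$ of a connected graph $G$, $d(u,v)$ is the length of a shortest $u$–$v$ path. A set $R\subseteq V(G)$ is a resolving set if for all distinct $x,y\in V(G)$ there is $r\in R$ with $d(r,x)\neq d(r,y)$. The metric dimension $\dim(G)$ is the minimum cardinality of a resolving set, and a resolving set of cardinality $\dim(G)$ is a metric basis. A vertex is a basis forced vertex if it belongs to every metric basis of $G$. *)

From mathcomp Require Import all_boot.
Set Implicit Arguments. Unset Strict Implicit. Unset Printing Implicit Defensive.

Definition simple_graph (T : finType) (e : rel T) : Prop :=
  symmetric e /\ irreflexive e.

Definition connected_graph (T : finType) (e : rel T) : Prop :=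
  forall u v : T, connect e u v.

Definition walk_len (T : finType) (e : rel T) (u v : T) (n : nat) : bool :=
  [exists p : n.-tuple T, path e u p && (last u p == v)].

(* d(u,v): least n with a u-v walk of length n (a shortest walk is a path,
   so this is the shortest-path distance); searched over 0..#|T|-1, which
   suffices in a connected graph. *)
Definition dist (T : finType) (e : rel T) (u v : T) : nat :=
  find (walk_len e u v) (iota 0 #|T|).

Definition resolving (T : finType) (e : rel T) (R : {set T}) : bool :=
  [forall x : T, forall y : T,
     (x != y) ==> [exists r in R, dist e r x != dist e r y]].

Definition metric_dim (T : finType) (e : rel T) : nat :=
  \big[minn/#|T|]_(R : {set T} | resolving e R) #|R|.

Definition metric_basis (T : finType) (e : rel T) (R : {set T}) : bool :=
  resolving e R && (#|R| == metric_dim e).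

Definition basis_forced (T : finType) (e : rel T) (v : T) : bool :=
  [forall R : {set T}, metric_basis e R ==> (v \in R)].

Definition forced_set (T : finType) (e : rel T) : {set T} :=
  [set v | basis_forced e v].

From mathcomp Require Import all_boot all_order zify.
Import Order.TTheory.
Set Implicit Arguments. Unset Strict Implicit.

(** Fix a metric basis B and let W be its complement. For a forced vertex v,
    neither B - v nor any swap (B - v) + w with w in W resolves G, and this
    produces two vertices of W which B - v does not distinguish, so v alone
    tells them apart. Hence, starting from the trivial partition of W, adding
    the forced vertices one at a time to a set S strictly increases the number
    of classes of W by distance vectors to S. So the k forced vertices cut W
    into more than k classes: k < |W| = n - dim(G). Forced vertices lie in B,
    so also k <= dim(G), whence 2k <= n - 1. *)

Lemma card_imset_lt (aT rT : finType) (g : aT -> rT) (D : {pred aT}) a b :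
  a \in D -> b \in D -> a != b -> g a = g b -> #|g @: D| < #|D|.
Proof.
move=> aD bD neq_ab gab; rewrite ltn_neqAle leq_imset_card andbT.
by apply/imset_injP=> g_inj; rewrite (g_inj a b aD bD gab) eqxx in neq_ab.
Qed.

Section MetricBasis.
Variables (T : finType) (e : rel T).

Lemma dist_le_card u v : dist e u v <= #|T|.
Proof. by rewrite /dist -{2}[#|T|](size_iota 0) find_size. Qed.

Lemma distnn u : dist e u u = 0.
Proof.
have : 0 < #|T| by apply/card_gt0P; exists u.
rewrite /dist; case: #|T| => //= n _.
suff -> : walk_len e u u 0 by [].
by apply/existsP; exists [tuple]; rewrite /= eqxx.
Qed.

Lemma dist_eq0 u v : dist e u v = 0 -> v = u.
Proof.
move=> duv0; have hasuv : has (walk_len e u v) (iota 0 #|T|).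
  by rewrite has_find -/(dist e u v) duv0 size_iota; apply/card_gt0P; exists u.
move: (nth_find 0 hasuv); rewrite -/(dist e u v) duv0 nth_iota; last first.
  by apply/card_gt0P; exists u.
by case/existsP=> p /andP[_]; rewrite tuple0 => /eqP.
Qed.

Definition unresolved (R : {set T}) x y :=
  forall r, r \in R -> dist e r x = dist e r y.

Lemma unresolved_sym (R : {set T}) x y : unresolved R x y -> unresolved R y x.
Proof. by move=> Rxy r /Rxy. Qed.

Lemma unresolvedS (R R' : {set T}) x y :
  R' \subset R -> unresolved R x y -> unresolved R' x y.
Proof. by move=> /subsetP sR'R Rxy r /sR'R /Rxy. Qed.

Lemma unresolved_mem (R : {set T}) x y : unresolved R x y -> x \in R -> y = x.
Proof. by move=> Rxy xR; apply: (@dist_eq0 x); rewrite -Rxy // distnn. Qed.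

Lemma unresolved_pair (R : {set T}) :
  ~~ resolving e R -> exists x y, x != y /\ unresolved R x y.
Proof.
case/forallPn=> x /forallPn[y].
rewrite negb_imply => /andP[neq_xy /existsPn Rxy].
by exists x, y; split=> // r rR; move/negP: (Rxy r); rewrite rR; case: eqP.
Qed.

Lemma resolvingT : resolving e setT.
Proof.
apply/forallP=> x; apply/forallP=> y; apply/implyP=> neq_xy.
apply/existsP; exists x; rewrite in_setT distnn /= eq_sym.
by apply: contra neq_xy => /eqP/dist_eq0 ->.
Qed.

Lemma metric_dim_le (R : {set T}) : resolving e R -> metric_dim e <= #|R|.
Proof.
move=> resR; have := bigmin_le_cond #|T| (fun S : {set T} => #|S|) resR.
by rewrite minEnat leEnat.
Qed.

Lemma metric_basis_exists : exists B, metric_basis e B.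
Proof.
case: (arg_minnP (fun B : {set T} => #|B|) resolvingT) => B resB minB.
exists B; rewrite /metric_basis resB eqn_leq metric_dim_le // andbT.
apply: (big_ind (fun m => #|B| <= m)) => [|m1 m2 Bm1 Bm2|].
- exact: max_card.
- by rewrite leq_min Bm1 Bm2.
- exact: minB.
Qed.

Section ForcedVertices.
Variable B : {set T}.
Hypothesis basisB : metric_basis e B.

Lemma forced_in_basis v : basis_forced e v -> v \in B.
Proof. by move/forallP/(_ B)/implyP; apply. Qed.

Lemma forced_set_sub : forced_set e \subset B.
Proof. by apply/subsetP=> v; rewrite inE; apply: forced_in_basis. Qed.

Lemma forced_basisD1_nresolving v :
  basis_forced e v -> ~~ resolving e (B :\ v).
Proof.
move=> forced_v; apply/negP=> /metric_dim_le.
case/andP: basisB => _ /eqP <-.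
by rewrite (cardsD1 v B) forced_in_basis // ltnn.
Qed.

Lemma forced_swap_nresolving v w :
  basis_forced e v -> w \notin B -> ~~ resolving e (w |: (B :\ v)).
Proof.
move=> forced_v wB; have vB := forced_in_basis forced_v.
apply/negP=> resB'; have : metric_basis e (w |: (B :\ v)).
  rewrite /metric_basis resB'; case/andP: basisB => _ /eqP <-.
  by rewrite cardsU1 in_setD1 (negbTE wB) andbF (cardsD1 v B) vB /=.
move/(implyP (forallP forced_v _)); rewrite !inE eqxx orbF => /eqP eq_vw.
by rewrite -eq_vw vB in wB.
Qed.

Lemma unresolvedD1_dist_neq v x y :
  x != y -> unresolved (B :\ v) x y -> dist e v x != dist e v y.
Proof.
move=> neq_xy Bxy; case/andP: basisB => /forallP/(_ x)/forallP/(_ y) resB _.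
case/existsP: (implyP resB neq_xy) => r /andP[rB].
by have [-> //|neq_rv] := eqVneq r v; rewrite Bxy ?eqxx // in_setD1 neq_rv rB.
Qed.

Lemma unresolved_basis_mem (R : {set T}) v x y : B :\ v \subset R ->
  x != y -> unresolved R x y -> x \in B -> x = v /\ y \notin B.
Proof.
move=> /subsetP sBR neq_xy Rxy xB.
have inR z : z \in B -> z != v -> z \in R.
  by move=> zB zv; rewrite sBR ?in_setD1 ?zv.
have [eq_xv|neq_xv] := eqVneq x v; last first.
  by rewrite (unresolved_mem Rxy (inR x xB neq_xv)) eqxx in neq_xy.
split=> //; apply/negP=> yB; have neq_yv : y != v by rewrite -eq_xv eq_sym.
have := unresolved_mem (unresolved_sym Rxy) (inR y yB neq_yv).
by move/eqP; rewrite (negbTE neq_xy).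
Qed.

Lemma unresolved_pair_cases (R : {set T}) v x y : B :\ v \subset R ->
  x != y -> unresolved R x y ->
  (x \notin B /\ y \notin B) \/ exists2 c, c \notin B & unresolved R v c.
Proof.
move=> sBR neq_xy Rxy; have [xB|xNB] := orP (orbN (x \in B)).
  have [eq_xv yNB] := unresolved_basis_mem sBR neq_xy Rxy xB.
  by right; exists y; rewrite -?eq_xv.
have [yB|yNB] := orP (orbN (y \in B)); last by left.
have neq_yx : y != x by rewrite eq_sym.
have [eq_yv _] := unresolved_basis_mem sBR neq_yx (unresolved_sym Rxy) yB.
by right; exists x; last by rewrite -eq_yv; apply: unresolved_sym.
Qed.

Lemma forced_unresolved_pair v : basis_forced e v ->
  exists x y, [/\ x \notin B, y \notin B, x != y & unresolved (B :\ v) x y].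
Proof.
move=> forced_v.
have [x [y [neq_xy Bxy]]] :=
  unresolved_pair (forced_basisD1_nresolving forced_v).
case: (unresolved_pair_cases (subxx _) neq_xy Bxy) => [[xB yB]|[z zB Bvz]].
  by exists x, y.
have sBB' : B :\ v \subset z |: (B :\ v) by apply: subsetUr.
have [a [b [neq_ab B'ab]]] :=
  unresolved_pair (forced_swap_nresolving forced_v zB).
case: (unresolved_pair_cases sBB' neq_ab B'ab) => [[aB bB]|[c cB B'vc]].
  by exists a, b; split=> //; apply: unresolvedS B'ab.
(* c is as far from z as v is, and v != z, so c != z *)
exists z, c; split=> //; last first.
  by move=> r rB; rewrite -(Bvz r rB) (B'vc r) // inE rB orbT.
apply: contraNneq zB => eq_zc.
have : dist e z v = 0 by rewrite (B'vc z (setU11 _ _)) -eq_zc distnn.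
by move/dist_eq0 <-; apply: forced_in_basis.
Qed.

Definition dist_vector (S : {set T}) (w : T) : {ffun T -> 'I_#|T|.+1} :=
  [ffun r => if r \in S then inord (dist e r w) else ord0].

Definition restrict (S : {set T}) (f : {ffun T -> 'I_#|T|.+1}) :=
  [ffun r => if r \in S then f r else ord0].

Lemma restrict_dist_vector (S S' : {set T}) w :
  S' \subset S -> restrict S' (dist_vector S w) = dist_vector S' w.
Proof.
move=> /subsetP sS'S; apply/ffunP=> r; rewrite !ffunE.
by case: ifP => // /sS'S ->.
Qed.

Lemma dist_vector_classes_lt (S : {set T}) v :
  basis_forced e v -> v \in S -> S \subset B ->
  #|dist_vector (S :\ v) @: ~: B| < #|dist_vector S @: ~: B|.
Proof.
move=> forced_v vS sSB.
have [x [y [xB yB neq_xy Bxy]]] := forced_unresolved_pair forced_v.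
have -> : dist_vector (S :\ v) @: (~: B) =
          restrict (S :\ v) @: (dist_vector S @: (~: B)).
  rewrite -imset_comp; apply: eq_imset => w.
  by rewrite /= restrict_dist_vector ?subsetDl.
apply: (@card_imset_lt _ _ _ _ (dist_vector S x) (dist_vector S y)).
- by apply: imset_f; rewrite inE.
- by apply: imset_f; rewrite inE.
- apply/eqP=> /ffunP/(_ v); rewrite !ffunE vS => /(congr1 val).
  rewrite /= !inordK ?ltnS ?dist_le_card //; apply/eqP.
  exact: unresolvedD1_dist_neq.
- rewrite !restrict_dist_vector ?subsetDl //; apply/ffunP=> r; rewrite !ffunE.
  by case: ifP => // rS; rewrite Bxy // (subsetP (setSD _ sSB)).
Qed.

Lemma card_forced_lt_classes (S : {set T}) : 0 < #|~: B| ->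
  S \subset forced_set e -> #|S| < #|dist_vector S @: ~: B|.
Proof.
move=> nonbasis_gt0; have [n] := ubnP #|S|; elim: n S => // n IH S ltSn sSF.
have [->|[v vS]] := set_0Vmem S.
  by rewrite cards0 card_gt0 imset_eq0 -card_gt0.
have forced_v : basis_forced e v by move: (subsetP sSF v vS); rewrite inE.
have sSB := subset_trans sSF forced_set_sub.
apply: leq_trans (dist_vector_classes_lt forced_v vS sSB).
rewrite (cardsD1 v S) vS in ltSn *; apply: IH ltSn _.
exact: subset_trans (subsetDl S _) sSF.
Qed.

Lemma card_forced_lt_nonbasis :
  0 < #|forced_set e| -> #|forced_set e| < #|~: B|.
Proof.
case/card_gt0P=> v; rewrite inE => forced_v.
have [x [_ [xB _ _ _]]] := forced_unresolved_pair forced_v.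
have nonbasis_gt0 : 0 < #|~: B| by apply/card_gt0P; exists x; rewrite inE.
apply: leq_trans (card_forced_lt_classes nonbasis_gt0 (subxx _)) _.
exact: leq_imset_card.
Qed.

End ForcedVertices.
End MetricBasis.

Theorem theorem8 (T : finType) (e : rel T) :
  simple_graph e -> connected_graph e ->
  0 < #|forced_set e| ->
  #|forced_set e| <= #|T| - metric_dim e - 1 /\
  (#|forced_set e|).*2 <= #|T| - 1.
Proof.
move=> _ _ forced_gt0; have [B basisB] := metric_basis_exists e.
have lt_forced_nonbasis := card_forced_lt_nonbasis basisB forced_gt0.
have le_forced_basis := subset_leq_card (forced_set_sub basisB).
have card_B : #|B| = metric_dim e by case/andP: basisB => _ /eqP.
have := cardsC B; lia.
Qed.
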